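(* Consider a polymatroid game with $n$ players, $m$ resources and demands $d_i$, and let $\delta=\max_{i}d_i$. Consider the following algorithm: initially set $\bar d_i=0$ and $\vec x_i=\vec 0$ for all players $i$. For $k=1,\dots,\sum_i d_i$: choose a player $i$ with $\bar d_i<d_i$, increase $\bar d_i$ by one, and replace $\vec x_i$ by a best response $\vec y_i\in\mathbb{B}_{f_i}(\bar d_i)$ to $\vec x_{-i}$ with $\|\vec y_i-\vec x_i\|=1$; then, while there is a player $j$ who can strictly decrease her private cost by unilaterally changing her strategy within $\mathbb{B}_{f_j}(\bar d_j)$, choose such a player and replace $\vec x_j$ by a best response $\vec y_j\in\mathbb{B}_{f_j}(\bar d_j)$ with $\|\vec y_j-\vec x_j\|=2$. Then the total number of iterations of this algorithm (iterations of the inner while-loop, summed over all rounds) is at most $n^2m\delta^3$.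
   Context: $\mathbb{N}=\{0,1,2,\dots\}$; $\|\cdot\|$ is the $L_1$-norm. A polymatroid game: players $N=\{1,\dots,n\}$, resources $E=\{1,\dots,m\}$; each player $i$ has an integral polymatroid rank function $f_i:2^E\to\mathbb{N}$ (normalized, monotone, submodular) and demand $d_i\le f_i(E)$; the strategy set for demand $d$ is $\mathbb{B}_{f_i}(d)=\{\vec x_i\in\mathbb{N}^E: x_i(U)\le f_i(U)\ \forall U\subseteq E,\ x_i(E)=d\}$, where $x_i(U)=\sum_{e\in U}x_{i,e}$. The private cost is $\pi_i(\vec x)=\sum_{e\in E}C_{i,e}(x_{i,e};x_{-i,e})$, $x_{-i,e}=\sum_{j\neq i}x_{j,e}$, with each $C_{i,e}:\mathbb{N}\times\mathbb{N}\to\mathbb{R}_+$ regular: writing $C^-(x;t)=C(x;t)-C(x-1;t)$ for $x\ge1$, $C^-(x;t)\le C^-(x;t+1)$ and $C^-(x;t+1)\le C^-(x+1;t)$ for all $x\ge1,t\in\mathbb{N}$. A best response of player $i$ to $\vec x_{-i}$ within a strategy set is a strategy minimizing $\pi_i(\cdot,\vec x_{-i})$ over that set. *)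

From mathcomp Require Import all_boot all_order all_algebra.
From mathcomp Require Import reals.
Set Implicit Arguments. Unset Strict Implicit. Unset Printing Implicit Defensive.
Import Order.TTheory GRing.Theory Num.Theory.
Local Open Scope ring_scope.

Section PolymatroidGame.
Variables (R : realType) (n m : nat).

Definition polymatroid (f : {set 'I_m} -> nat) : Prop :=
  [/\ f set0 = 0%N,
      (forall A B : {set 'I_m}, A \subset B -> (f A <= f B)%N) &
      (forall A B : {set 'I_m}, (f (A :|: B) + f (A :&: B) <= f A + f B)%N)].

Definition marg (C : nat -> nat -> R) (x t : nat) : R := C x t - C x.-1 t.

Definition regular (C : nat -> nat -> R) : Prop :=
  (forall x t, 0 <= C x t) /\
  (forall x t : nat, (1 <= x)%N ->
     marg C x t <= marg C x t.+1 /\ marg C x t.+1 <= marg C x.+1 t).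

Definition inB (f : {set 'I_m} -> nat) (d : nat) (y : 'I_m -> nat) : Prop :=
  (forall U : {set 'I_m}, (\sum_(e in U) y e <= f U)%N) /\
  (\sum_(e : 'I_m) y e)%N = d.

Definition profile := 'I_n -> 'I_m -> nat.

Definition upd (T : Type) (x : 'I_n -> T) (i : 'I_n) (y : T) : 'I_n -> T :=
  fun j => if j == i then y else x j.

Definition pcost (C : 'I_n -> 'I_m -> nat -> nat -> R) (x : profile) (i : 'I_n) : R :=
  \sum_(e : 'I_m) C i e (x i e) (\sum_(j < n | j != i) x j e)%N.

Definition l1 (y z : 'I_m -> nat) : nat :=
  (\sum_(e : 'I_m) ((y e - z e) + (z e - y e)))%N.

Definition best_response (f : 'I_n -> {set 'I_m} -> nat)
    (C : 'I_n -> 'I_m -> nat -> nat -> R) (x : profile) (i : 'I_n) (d : nat)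
    (y : 'I_m -> nat) : Prop :=
  inB (f i) d y /\
  forall z, inB (f i) d z -> pcost C (upd x i y) i <= pcost C (upd x i z) i.

Definition can_improve (f : 'I_n -> {set 'I_m} -> nat)
    (C : 'I_n -> 'I_m -> nat -> nat -> R) (x : profile) (i : 'I_n) (d : nat) : Prop :=
  exists z, inB (f i) d z /\ pcost C (upd x i z) i < pcost C x i.

(* algorithm state: (current demands dbar, current profile x) *)
Definition state := ((('I_n -> nat) * profile)%type).

Definition init_state : state := (fun _ => 0%N, fun _ _ => 0%N).

(* outer step (round k): all players are stable, pick i with dbar_i < d_i,
   increase dbar_i and move to a best response at distance 1 *)
Definition inc_step (f : 'I_n -> {set 'I_m} -> nat)
    (C : 'I_n -> 'I_m -> nat -> nat -> R) (d : 'I_n -> nat) (s s' : state) : Prop :=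
  exists i y,
    [/\ (forall j, ~ can_improve f C s.2 j (s.1 j)),
        (s.1 i < d i)%N /\ s'.1 = upd s.1 i (s.1 i).+1,
        best_response f C s.2 i (s.1 i).+1 y,
        l1 y (s.2 i) = 1%N &
        s'.2 = upd s.2 i y].

Definition imp_step (f : 'I_n -> {set 'I_m} -> nat)
    (C : 'I_n -> 'I_m -> nat -> nat -> R) (s s' : state) : Prop :=
  exists j y,
    [/\ can_improve f C s.2 j (s.1 j),
        s'.1 = s.1,
        best_response f C s.2 j (s.1 j) y,
        l1 y (s.2 j) = 2%N &
        s'.2 = upd s.2 j y].

(* a (prefix of an) execution of the algorithm of length N: states s 0..N,
   kind k = true iff step k is an inner while-loop iteration *)
Definition valid_run (f : 'I_n -> {set 'I_m} -> nat)
    (C : 'I_n -> 'I_m -> nat -> nat -> R) (d : 'I_n -> nat)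
    (N : nat) (s : nat -> state) (kind : nat -> bool) : Prop :=
  s 0%N = init_state /\
  forall k, (k < N)%N ->
    if kind k then imp_step f C (s k) (s k.+1) else inc_step f C d (s k) (s k.+1).

End PolymatroidGame.

From mathcomp Require Import all_boot all_order all_algebra.
From mathcomp Require Import reals.
From mathcomp Require Import ring lra zify.
From Stdlib Require Import FunctionalExtensionality.
Set Implicit Arguments. Unset Strict Implicit. Unset Printing Implicit Defensive.
Import Order.TTheory GRing.Theory Num.Theory.

(* Fix a round and let L be the load just before its increment.  Throughout the inner
   loop of the round the load is L plus one extra unit on some resource h; the player p who
   moved last plays a best response whose top unit on h costs at least as much as any unit
   it could move onto h, and every other player is exchange-stable against L.  Hence an
   improving player must move a unit away from h, and becomes the new holder of the extra
   unit.  Value each unit of a player by the number of that player's unit slots whose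
   marginal cost at load L + 1 is strictly smaller: an improving move trades a unit for a
   strictly cheaper one, so this potential, which is at most n m delta^2, strictly
   decreases.  A round thus has at most n m delta^2 inner iterations, and there are at most
   n delta rounds. *)

Section Marginals.
Variables (R : realType) (C : nat -> nat -> R).
Hypothesis Creg : regular C.
Local Open Scope ring_scope.

Lemma marg_le_others u t t' : (0 < u)%N -> (t <= t')%N -> marg C u t <= marg C u t'.
Proof.
move=> u_gt0 /subnKC <-; elim: (t' - t)%N => [|k IH]; first by rewrite addn0.
by rewrite addnS (le_trans IH) // (Creg.2 _ _ u_gt0).1.
Qed.

Lemma marg_le_succ u T : (0 < u)%N -> marg C u (T - u) <= marg C u.+1 (T - u.+1).
Proof.
move=> u_gt0; have [lt_uT | le_Tu] := ltnP u T.
  have -> : (T - u = (T - u.+1).+1)%N by lia.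
  exact: (Creg.2 _ _ u_gt0).2.
have -> : (T - u = 0)%N by lia.
have -> : (T - u.+1 = 0)%N by lia.
by have [le_u01 le_u10] := Creg.2 u 0%N u_gt0; exact: le_trans le_u01 le_u10.
Qed.

End Marginals.

Lemma sum_nat_eq1_indicator (I : finType) (F : I -> nat) :
  (\sum_i F i = 1)%N -> exists b, forall i, F i = (i == b) :> nat.
Proof.
move=> /eqP /sum_nat_eq1 [b [_ Fb F0]]; exists b => i.
by case: eqVneq => [->|/F0 ->].
Qed.

Lemma sum_indicator (I : finType) (P : pred I) c : (\sum_(i | P i) (i == c) = P c)%N.
Proof.
case Pc: (P c).
  by rewrite (bigD1 c) //= eqxx big1 // => i /andP [_ /negbTE ->].
by rewrite big1 // => i Pi; case: eqVneq Pi => // ->; rewrite Pc.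
Qed.

Section Exchange.
Variable m : nat.
Implicit Types (v y z : 'I_m -> nat) (a b c h : 'I_m).

Definition exchange v a b z : Prop := forall e, (z e + (e == a) = v e + (e == b))%N.

Lemma exchangeE v a b z : a != b -> exchange v a b z ->
  [/\ v a = (z a).+1, z b = (v b).+1 & forall e, e != a -> e != b -> z e = v e].
Proof.
move=> neq_ab vz; split.
- by move: (vz a); rewrite eqxx (negbTE neq_ab) /=; lia.
- by move: (vz b); rewrite eqxx eq_sym (negbTE neq_ab) /=; lia.
- by move=> e /negbTE ea /negbTE eb; move: (vz e); rewrite ea eb /=; lia.
Qed.

Lemma exchange_sum (U : {set 'I_m}) v a b z : exchange v a b z ->
  (\sum_(e in U) z e + (a \in U) = \sum_(e in U) v e + (b \in U))%N.
Proof.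
move=> vz; have : (\sum_(e in U) (z e + (e == a)) = \sum_(e in U) (v e + (e == b)))%N.
  exact: eq_bigr.
by rewrite !big_split !sum_indicator.
Qed.

Lemma exchange_sumT v a b z : exchange v a b z -> (\sum_e z e = \sum_e v e)%N.
Proof.
move=> vz; have : (\sum_e (z e + (e == a)) = \sum_e (v e + (e == b)))%N.
  exact: eq_bigr.
by rewrite !big_split !sum_indicator /= !addn1 => -[].
Qed.

Definition move_unit v a b : 'I_m -> nat := fun e => (v e + (e == b) - (e == a))%N.

Lemma exchange_move_unit v a b : a != b -> (0 < v a)%N -> exchange v a b (move_unit v a b).
Proof.
move=> neq_ab va_gt0 e; rewrite /move_unit.
by case: (eqVneq e a) => [->|_]; rewrite ?(negbTE neq_ab) /=; lia.
Qed.

Lemma l1_parts v y :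
  l1 y v = (\sum_e (y e - v e) + \sum_e (v e - y e))%N /\
  (\sum_e y e + \sum_e (v e - y e) = \sum_e v e + \sum_e (y e - v e))%N.
Proof.
split; first by rewrite /l1 big_split.
by rewrite -!big_split /=; apply: eq_bigr => e _; lia.
Qed.

Lemma l1_eq1_add v y : l1 y v = 1%N -> (\sum_e y e = (\sum_e v e).+1)%N ->
  exists b, forall e, (y e = v e + (e == b))%N.
Proof.
move=> l1_yv sum_yv; have [l1E balance] := l1_parts v y.
have [b yvE] : exists b, forall e, (y e - v e = (e == b))%N.
  by apply: sum_nat_eq1_indicator; lia.
have /eqP : (\sum_e (v e - y e) = 0)%N by lia.
rewrite sum_nat_eq0 => /forallP vy0; exists b => e.
by move: (yvE e) (vy0 e) => /= <- /eqP; lia.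
Qed.

Lemma l1_eq2_exchange v y : l1 y v = 2%N -> (\sum_e y e = \sum_e v e)%N ->
  exists a b, a != b /\ exchange v a b y.
Proof.
move=> l1_yv sum_yv; have [l1E balance] := l1_parts v y.
have [b yvE] : exists b, forall e, (y e - v e = (e == b))%N.
  by apply: sum_nat_eq1_indicator; lia.
have [a vyE] : exists a, forall e, (v e - y e = (e == a))%N.
  by apply: sum_nat_eq1_indicator; lia.
exists a, b; split; last by move=> e; rewrite -yvE -vyE; lia.
by apply/eqP => eq_ab; move: (yvE a) (vyE a); rewrite eq_ab eqxx /=; lia.
Qed.

Lemma inB_move_unit_of_add (g : {set 'I_m} -> nat) dd v y a h :
  a != h -> (0 < v a)%N -> (forall e, y e = v e + (e == h))%N ->
  inB g dd v -> inB g dd.+1 y -> inB g dd (move_unit v a h).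
Proof.
move=> neq_ah va_gt0 yE [v_le v_sum] [y_le _].
have vw := exchange_move_unit neq_ah va_gt0.
split; last by rewrite (exchange_sumT vw).
move=> U; have := exchange_sum U vw; have := v_le U; have := y_le U.
rewrite (eq_bigr _ (fun e _ => yE e)) big_split sum_indicator /=.
by case: (a \in U); case: (h \in U) => /=; lia.
Qed.

Lemma inB_move_unit_of_exchanges (g : {set 'I_m} -> nat) dd v y z a c h :
  a != c -> a != h -> c != h -> exchange v c h y -> exchange y a h z ->
  inB g dd v -> inB g dd y -> inB g dd z -> inB g dd (move_unit v a h).
Proof.
move=> neq_ac neq_ah neq_ch vy yz [v_le v_sum] [y_le _] [z_le _].
have [_ _ /(_ a neq_ac neq_ah) yaE] := exchangeE neq_ch vy.
have [yaS _ _] := exchangeE neq_ah yz.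
have vw := exchange_move_unit neq_ah (_ : 0 < v a)%N.
split => [U|]; last by rewrite (exchange_sumT (vw _)) //; lia.
have := exchange_sum U (vw _); have := exchange_sum U vy.
have := exchange_sum U yz; have := v_le U; have := y_le U; have := z_le U.
rewrite /= -yaE yaS; case: (a \in U); case: (c \in U); case: (h \in U) => /=; lia.
Qed.

End Exchange.

Section Game.
Variables (R : realType) (n m : nat).
Variables (f : 'I_n -> {set 'I_m} -> nat) (d : 'I_n -> nat).
Variable C : 'I_n -> 'I_m -> nat -> nat -> R.
Hypothesis Creg : forall i e, regular (C i e).
Local Open Scope ring_scope.
Implicit Types (x : profile n m) (s : state n m) (L v y z : 'I_m -> nat).

Definition load x e : nat := (\sum_(i < n) x i e)%N.
Definition others_load x j e : nat := (\sum_(i < n | i != j) x i e)%N.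

Lemma loadE x j e : load x e = (x j e + others_load x j e)%N.
Proof. by rewrite /load (bigD1 j). Qed.

Lemma others_loadE x j e : others_load x j e = (load x e - x j e)%N.
Proof. by rewrite (loadE x j) addKn. Qed.

Lemma upd_same (T : Type) (x : 'I_n -> T) j t : upd x j t j = t.
Proof. by rewrite /upd eqxx. Qed.

Lemma upd_other (T : Type) (x : 'I_n -> T) j t k : k != j -> upd x j t k = x k.
Proof. by rewrite /upd => /negbTE ->. Qed.

Lemma upd_upd (T : Type) (x : 'I_n -> T) j t t' : upd (upd x j t) j t' = upd x j t'.
Proof. by apply: functional_extensionality => k; rewrite /upd; case: (k == j). Qed.

Lemma others_load_upd x j z e : others_load (upd x j z) j e = others_load x j e.
Proof. by apply: eq_bigr => i ij; rewrite upd_other. Qed.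

Lemma pcostE x j : pcost C x j = \sum_e C j e (x j e) (others_load x j e).
Proof. by []. Qed.

Lemma pcost_upd x j z : pcost C (upd x j z) j = \sum_e C j e (z e) (others_load x j e).
Proof. by rewrite pcostE; apply: eq_bigr => e _; rewrite upd_same others_load_upd. Qed.

Lemma pcost_exchange x j a b z : a != b -> exchange (x j) a b z ->
  pcost C (upd x j z) j = pcost C x j + marg (C j b) (x j b).+1 (others_load x j b)
                                      - marg (C j a) (x j a) (others_load x j a).
Proof.
move=> neq_ab xz; have [xaS zbS zE] := exchangeE neq_ab xz.
have neq_ba : b != a by rewrite eq_sym.
rewrite pcost_upd pcostE (bigD1 b) //= (bigD1 a) //= [in RHS](bigD1 b) //=.
rewrite [in RHS](bigD1 a) //= zbS xaS /marg /=.
rewrite (eq_bigr (fun e => C j e (x j e) (others_load x j e))); first lra.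
by move=> e /andP [eb ea]; rewrite zE.
Qed.

Definition optimal_at x j dj : Prop :=
  forall z, inB (f j) dj z -> pcost C x j <= pcost C (upd x j z) j.

Lemma stable_optimal_at x j dj : ~ can_improve f C x j dj -> optimal_at x j dj.
Proof. by move=> no_impr z zB; rewrite leNgt; apply/negP => lt_z; apply: no_impr; exists z. Qed.

Lemma best_response_optimal_at x j dj y :
  best_response f C x j dj y -> optimal_at (upd x j y) j dj.
Proof. by move=> [_ opt] z zB; rewrite upd_upd; exact: opt. Qed.

Lemma optimal_exchange_marg_le x j dj a b z : a != b -> exchange (x j) a b z ->
  inB (f j) dj z -> optimal_at x j dj ->
  marg (C j a) (x j a) (others_load x j a) <= marg (C j b) (x j b).+1 (others_load x j b).
Proof. by move=> neq_ab xz zB /(_ z zB); rewrite (pcost_exchange neq_ab xz); lra. Qed.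

Lemma improving_exchange_marg_lt x j a b z : a != b -> exchange (x j) a b z ->
  pcost C (upd x j z) j < pcost C x j ->
  marg (C j b) (x j b).+1 (others_load x j b) < marg (C j a) (x j a) (others_load x j a).
Proof. by move=> neq_ab xz; rewrite (pcost_exchange neq_ab xz); lra. Qed.

Definition exchange_stable L k v dk : Prop :=
  forall a b z, a != b -> exchange v a b z -> inB (f k) dk z ->
    marg (C k a) (v a) (L a - v a) <= marg (C k b) (v b).+1 (L b - v b).

(* Inside the round whose increment started from the load [L], the extra unit sits
   on [h] and is held by [p], the player who moved last. *)
Definition round_inv L h p s : Prop :=
  [/\ forall e, load s.2 e = (L e + (e == h))%N,
      optimal_at s.2 p (s.1 p),
      forall k, k != p -> exchange_stable L k (s.2 k) (s.1 k),
      forall a z, a != h -> exchange (s.2 p) a h z -> inB (f p) (s.1 p) z ->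
        marg (C p a) (s.2 p a) (L a - s.2 p a)
          <= marg (C p h) (s.2 p h) (L h + 1 - s.2 p h)
    & (0 < s.2 p h)%N].

Lemma round_inv_others_load L h p s k e :
  round_inv L h p s -> others_load s.2 k e = (L e + (e == h) - s.2 k e)%N.
Proof. by case=> loadL _ _ _ _; rewrite others_loadE loadL. Qed.

Lemma round_inv_holder_stable L h p s :
  round_inv L h p s -> exchange_stable L p (s.2 p) (s.1 p).
Proof.
move=> inv; have [_ opt _ holder xph_gt0] := inv.
move=> a c z neq_ac xz zB; have [xaS _ _] := exchangeE neq_ac xz.
have := optimal_exchange_marg_le neq_ac xz zB opt.
rewrite !(round_inv_others_load _ _ inv) => le_ac.
case: (eqVneq c h) => [ech | nech].
  subst c; apply: le_trans (holder a z neq_ac xz zB) _.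
  have := marg_le_succ (Creg p h) (L h + 1) xph_gt0.
  by have -> : (L h + 1 - (s.2 p h).+1 = L h - s.2 p h)%N by lia.
rewrite (negbTE nech) addn0 in le_ac; apply: le_trans le_ac.
by apply: marg_le_others => //; lia.
Qed.

Definition dmax : nat := \max_(i < n) d i.

(* [L e + 1 - u] is the others' load when [e] carries [L e + 1] units: the load seen by the
   moving unit at both ends of an improving move. *)
Definition unit_marg L k e u : R := marg (C k e) u (L e + 1 - u).

Definition slot_rank L k (c : R) : nat :=
  #|[set q : 'I_m * 'I_dmax | unit_marg L k q.1 q.2.+1 < c]|.

Definition player_potential L k v : nat :=
  (\sum_e \sum_(u < v e) slot_rank L k (unit_marg L k e u.+1))%N.

Definition potential L x : nat := (\sum_k player_potential L k (x k))%N.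

Lemma slot_rank_lt L k e u c : (u < dmax)%N -> unit_marg L k e u.+1 < c ->
  (slot_rank L k (unit_marg L k e u.+1) < slot_rank L k c)%N.
Proof.
move=> lt_u lt_c; apply/proper_card/properP; split.
  by apply/subsetP => q; rewrite !inE => /lt_trans; apply.
by exists (e, Ordinal lt_u); rewrite !inE /= ?ltxx.
Qed.

Lemma slot_rank_le L k c : (slot_rank L k c <= m * dmax)%N.
Proof. by rewrite (leq_trans (max_card _)) // card_prod !card_ord. Qed.

Lemma player_potential_exchange L k v y h b : h != b -> exchange v h b y ->
  (player_potential L k y + slot_rank L k (unit_marg L k h (v h))
     = player_potential L k v + slot_rank L k (unit_marg L k b (v b).+1))%N.
Proof.
move=> neq_hb vy; have [vhS ybS yE] := exchangeE neq_hb vy.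
have neq_bh : b != h by rewrite eq_sym.
pose F w e := (\sum_(u < w e) slot_rank L k (unit_marg L k e u.+1))%N.
have rest : (\sum_(e | (e != h) && (e != b)) F y e = \sum_(e | (e != h) && (e != b)) F v e)%N.
  by apply: eq_bigr => e /andP [eh eb]; rewrite /F yE.
rewrite /player_potential -/(F y _) -/(F v _).
rewrite (bigD1 h) //= (bigD1 b) //= [in RHS](bigD1 h) //= [in RHS](bigD1 b) //= rest.
by rewrite /F vhS ybS !big_ord_recr /=; lia.
Qed.

Lemma potential_exchange L x j y h b : h != b -> exchange (x j) h b y ->
  (potential L (upd x j y) + slot_rank L j (unit_marg L j h (x j h))
     = potential L x + slot_rank L j (unit_marg L j b (x j b).+1))%N.
Proof.
move=> neq_hb xy; rewrite /potential (bigD1 j) //= [in RHS](bigD1 j) //= upd_same.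
rewrite (eq_bigr (fun k => player_potential L k (x k))) => [|k kj]; last first.
  by rewrite upd_other.
by have := player_potential_exchange L j neq_hb xy; lia.
Qed.

Definition feasible s : Prop := forall k, (s.1 k <= d k)%N /\ inB (f k) (s.1 k) (s.2 k).

Definition potential_bound : nat := (n * m * dmax ^ 2)%N.

Lemma player_potential_le L k v : (player_potential L k v <= (\sum_e v e) * (m * dmax))%N.
Proof.
rewrite big_distrl /=; apply: leq_sum => e _.
apply: (@leq_trans (\sum_(u < v e) m * dmax)%N); first by apply: leq_sum => u _; exact: slot_rank_le.
by rewrite sum_nat_const card_ord.
Qed.

Lemma potential_le L s : feasible s -> (potential L s.2 <= potential_bound)%N.
Proof.
move=> feas; apply: (@leq_trans (\sum_(k < n) dmax * (m * dmax))%N).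
  apply: leq_sum => k _; have [le_dk [_ sum_k]] := feas k.
  apply: leq_trans (player_potential_le L k (s.2 k)) _.
  by rewrite sum_k leq_mul2r (leq_trans le_dk) ?leq_bigmax ?orbT.
by rewrite sum_nat_const card_ord /potential_bound; apply/eq_leq; ring.
Qed.

Lemma exchange_stable_after_move L j dj v y h b :
  exchange_stable L j v dj -> inB (f j) dj v -> inB (f j) dj y ->
  h != b -> exchange v h b y ->
  forall a z, a != b -> exchange y a b z -> inB (f j) dj z ->
    marg (C j a) (y a) (L a - y a) <= marg (C j b) (y b) (L b + 1 - y b).
Proof.
move=> stab vB yB neq_hb vy a z neq_ab yz zB.
have [vhS ybS yE] := exchangeE neq_hb vy; have [yaS _ _] := exchangeE neq_ab yz.
rewrite ybS (_ : L b + 1 - (v b).+1 = L b - v b)%N; last by lia.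
case: (eqVneq a h) => [eq_ah | neq_ah].
  subst a; apply: le_trans (stab h b y neq_hb vy yB).
  by have := marg_le_succ (Creg j h) (L h) (_ : 0 < y h)%N; rewrite vhS yaS; apply.
have yaE := yE a neq_ah neq_ab; have va_gt0 : (0 < v a)%N by rewrite -yaE yaS.
rewrite yaE; apply: (stab _ _ _ neq_ab (exchange_move_unit neq_ab va_gt0)).
exact: inB_move_unit_of_exchanges neq_ah neq_ab neq_hb vy yz vB yB zB.
Qed.

Lemma round_inv_improving_move L h p s j y :
  round_inv L h p s -> inB (f j) (s.1 j) (s.2 j) -> inB (f j) (s.1 j) y ->
  l1 y (s.2 j) = 2%N -> pcost C (upd s.2 j y) j < pcost C s.2 j ->
  exists2 b, exchange (s.2 j) h b y &
    [/\ j != p, b != h & unit_marg L j b (s.2 j b).+1 < unit_marg L j h (s.2 j h)].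
Proof.
move=> inv xB yB l1_y lt_y; have [_ opt stab _ _] := inv.
have neq_jp : j != p.
  by apply/eqP => eq_jp; subst j; move: lt_y; rewrite ltNge (opt y yB).
have [a [b [neq_ab xy]]] : exists a b, a != b /\ exchange (s.2 j) a b y.
  by apply: l1_eq2_exchange l1_y _; rewrite yB.2 xB.2.
have := improving_exchange_marg_lt neq_ab xy lt_y.
rewrite !(round_inv_others_load _ _ inv) => lt_ba; have [xaS _ _] := exchangeE neq_ab xy.
have eq_ah : a = h.
  apply/eqP; apply: contraTT lt_ba => neq_ah; rewrite -leNgt (negbTE neq_ah) addn0.
  apply: le_trans (stab j neq_jp a b y neq_ab xy yB) _.
  by apply: marg_le_others => //; lia.
subst a; have neq_bh : b != h by rewrite eq_sym.
exists b => //; split => //; move: lt_ba.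
rewrite /unit_marg (_ : L b + 1 - (s.2 j b).+1 = L b - s.2 j b)%N; last by lia.
by rewrite eqxx (negbTE neq_bh) /= addn0.
Qed.

Lemma round_inv_move L h p s j b y :
  round_inv L h p s -> inB (f j) (s.1 j) (s.2 j) -> j != p -> b != h ->
  exchange (s.2 j) h b y -> inB (f j) (s.1 j) y -> optimal_at (upd s.2 j y) j (s.1 j) ->
  round_inv L b j (s.1, upd s.2 j y).
Proof.
move=> inv xB neq_jp neq_bh xy yB opt; have [loadL _ stab _ _] := inv.
have neq_hb : h != b by rewrite eq_sym.
split => /=; rewrite ?upd_same //.
- move=> e; rewrite (loadE _ j) upd_same others_load_upd.
  by have := loadL e; rewrite (loadE s.2 j); have := xy e; lia.
- move=> k neq_kj; rewrite upd_other //.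
  by case: (eqVneq k p) => [->|neq_kp]; [exact: round_inv_holder_stable inv | exact: stab].
- exact: exchange_stable_after_move (stab j neq_jp) xB yB neq_hb xy.
- by have [_ -> _] := exchangeE neq_hb xy.
Qed.

Lemma round_inv_imp_step L h p s s' : feasible s -> round_inv L h p s -> imp_step f C s s' ->
  exists h' p', round_inv L h' p' s' /\ (potential L s'.2 < potential L s.2)%N.
Proof.
move=> feas inv [j [y [[z [zB lt_z]] e1 br l1_y e2]]].
have -> : s' = (s.1, upd s.2 j y) by case: s' e1 e2 => ? ? /= -> ->.
have [yB _] := br; have [le_dj xB] := feas j.
have lt_y : pcost C (upd s.2 j y) j < pcost C s.2 j by apply: le_lt_trans (br.2 z zB) lt_z.
have [b xy [neq_jp neq_bh lt_marg]] := round_inv_improving_move inv xB yB l1_y lt_y.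
have neq_hb : h != b by rewrite eq_sym.
exists b, j; split.
  exact: round_inv_move inv xB neq_jp neq_bh xy yB (best_response_optimal_at br).
have lt_xb : (s.2 j b < dmax)%N.
  have [_ ybS _] := exchangeE neq_hb xy.
  rewrite -ybS (leq_trans _ (leq_bigmax j)) // (leq_trans _ le_dj) // -yB.2.
  by rewrite (bigD1 b) //= leq_addr.
have := potential_exchange L neq_hb xy; have := slot_rank_lt lt_xb lt_marg; rewrite /=; lia.
Qed.

Lemma round_inv_inc_step s s' : feasible s -> inc_step f C d s s' ->
  exists h p, round_inv (load s.2) h p s'.
Proof.
move=> feas [i [y [no_impr [_ e1] br l1_y e2]]].
have [_ xB] := feas i; have [yB _] := br.
have [h yE] : exists h, forall e, (y e = s.2 i e + (e == h))%N.
  by apply: l1_eq1_add l1_y _; rewrite yB.2 xB.2.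
have -> : s' = (upd s.1 i (s.1 i).+1, upd s.2 i y) by case: s' e1 e2 => ? ? /= -> ->.
exists h, i; split => /=.
- by move=> e; rewrite (loadE _ i) upd_same others_load_upd yE (loadE s.2 i); lia.
- by rewrite upd_same; exact: best_response_optimal_at br.
- move=> k neq_ki; rewrite !upd_other // => a b z neq_ab xz zB.
  have := optimal_exchange_marg_le neq_ab xz zB (stable_optimal_at (no_impr k)).
  by rewrite !others_loadE.
- move=> a z neq_ah; rewrite !upd_same => yz zB.
  have [yaS _ _] := exchangeE neq_ah yz.
  have yaE : y a = s.2 i a by rewrite yE (negbTE neq_ah) addn0.
  have va_gt0 : (0 < s.2 i a)%N by rewrite -yaE yaS.
  have wB := inB_move_unit_of_add neq_ah va_gt0 yE xB yB.
  have := optimal_exchange_marg_le neq_ah (exchange_move_unit neq_ah va_gt0) wB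
            (stable_optimal_at (no_impr i)).
  rewrite !others_loadE yaE yE eqxx /= addn1.
  by rewrite (_ : load s.2 h + 1 - (s.2 i h).+1 = load s.2 h - s.2 i h)%N //; lia.
- by rewrite upd_same yE eqxx /= addn1.
Qed.

Definition stable s : Prop := forall j, ~ can_improve f C s.2 j (s.1 j).

Definition demand_sum s : nat := (\sum_i s.1 i)%N.

Definition within_budget (c : nat) s : Prop :=
  (stable s /\ (c <= potential_bound * demand_sum s)%N) \/
  exists L h p, round_inv L h p s /\ (c + potential L s.2 <= potential_bound * demand_sum s)%N.

Lemma within_budget_le c s : within_budget c s -> (c <= potential_bound * demand_sum s)%N.
Proof. by case=> [[_ //] | [L [h [p [_ le_c]]]]]; lia. Qed.

Lemma demand_sum_le s : feasible s -> (demand_sum s <= n * dmax)%N.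
Proof.
move=> feas; apply: (@leq_trans (\sum_(i < n) dmax)%N); last by rewrite sum_nat_const card_ord.
by apply: leq_sum => i _; exact: leq_trans (feas i).1 (leq_bigmax i).
Qed.

Lemma feasible_init : feasible (init_state n m).
Proof. by move=> k; split => //; split => [U|]; rewrite big1. Qed.

Lemma stable_init : stable (init_state n m).
Proof.
move=> j [z [[_ sum_z] lt_z]].
have z0 : z = fun _ => 0%N.
  apply: functional_extensionality => e; apply/eqP.
  by move: sum_z => /eqP; rewrite sum_nat_eq0 => /forallP /(_ e).
move: lt_z; rewrite z0 (_ : upd _ j _ = (init_state n m).2) ?ltxx //.
by apply: functional_extensionality => k; rewrite /upd; case: (k == j).
Qed.

Lemma feasible_imp_step s s' : feasible s -> imp_step f C s s' -> feasible s'.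
Proof.
move=> feas [j [y [_ e1 [yB _] _ e2]]] k; rewrite e1 e2.
case: (eqVneq k j) => [->|neq_kj]; first by rewrite upd_same (feas j).1.
by rewrite upd_other //; exact: feas.
Qed.

Lemma feasible_inc_step s s' : feasible s -> inc_step f C d s s' -> feasible s'.
Proof.
move=> feas [i [y [_ [lt_di e1] [yB _] _ e2]]] k; rewrite e1 e2.
case: (eqVneq k i) => [->|neq_ki]; first by rewrite !upd_same.
by rewrite !upd_other //; exact: feas.
Qed.

Lemma within_budget_imp_step c s s' : feasible s -> within_budget c s -> imp_step f C s s' ->
  within_budget c.+1 s'.
Proof.
move=> feas [[stable_s _] | [L [h [p [inv le_c]]]]] step.
  by case: step => j [y [improve _ _ _ _]]; case: (stable_s j improve).
have [h' [p' [inv' lt_pot]]] := round_inv_imp_step feas inv step.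
have sum_s' : demand_sum s' = demand_sum s.
  by case: step => j [y [_ e1 _ _ _]]; rewrite /demand_sum e1.
by right; exists L, h', p'; split => //; rewrite sum_s'; lia.
Qed.

Lemma within_budget_inc_step c s s' : feasible s -> feasible s' -> within_budget c s ->
  inc_step f C d s s' -> within_budget c s'.
Proof.
move=> feas feas' budget step; have [h [p inv]] := round_inv_inc_step feas step.
have le_c := within_budget_le budget; have le_pot := potential_le (load s.2) feas'.
have sum_s' : demand_sum s' = (demand_sum s).+1.
  case: step => i [y [_ [_ e1] _ _ _]]; rewrite /demand_sum e1 (bigD1 i) //= upd_same.
  rewrite [in RHS](bigD1 i) //= addSn; congr (_ + _).+1.
  by apply: eq_bigr => k neq_ki; rewrite upd_other.
by right; exists (load s.2), h, p; split => //; rewrite sum_s' mulnS; lia.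
Qed.

Lemma valid_run_within_budget N (s : nat -> state n m) kind : valid_run f C d N s kind ->
  forall k, (k <= N)%N -> feasible (s k) /\ within_budget (\sum_(i < k) kind i) (s k).
Proof.
move=> [s0 step]; elim=> [_ | k IH lt_kN].
  by rewrite s0 big_ord0; split; [exact: feasible_init | left; split; [exact: stable_init |]].
have [feas budget] := IH (ltnW lt_kN); rewrite big_ord_recr /=.
move: (step k lt_kN); case: (kind k) => /= st; rewrite ?addn1 ?addn0.
  by split; [exact: feasible_imp_step st | exact: within_budget_imp_step st].
have feas' := feasible_inc_step feas st.
by split => //; exact: within_budget_inc_step st.
Qed.

End Game.

Theorem corollary5p2 (R : realType) (n m : nat)
    (f : 'I_n -> {set 'I_m} -> nat) (d : 'I_n -> nat)
    (C : 'I_n -> 'I_m -> nat -> nat -> R) :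
  (forall i, polymatroid (f i)) ->
  (forall i, (d i <= f i [set: 'I_m])%N) ->
  (forall i e, regular (C i e)) ->
  forall (N : nat) (s : nat -> state n m) (kind : nat -> bool),
    valid_run f C d N s kind ->
    (\sum_(k < N) kind k <= n ^ 2 * m * (\max_(i < n) d i) ^ 3)%N.
Proof.
move=> _ _ Creg N s kind run.
have [feas budget] := valid_run_within_budget Creg run (leqnn N).
apply: leq_trans (within_budget_le budget) _.
apply: leq_trans (leq_mul (leqnn _) (demand_sum_le feas)) _.
by rewrite /potential_bound /dmax; apply/eq_leq; ring.
Qed.
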